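(* Let $n\ge1$, $1\le k\le n$, $l\ge1$, $k'=n+1-k$, $d=kk'$, and regard $B=B(l\bar\Lambda_k)$ as the set of semistandard tableaux $(m_{i,i'})_{1\le i\le k,1\le i'\le l}$ with entries in $\{1,\dots,n+1\}$, $m_{i,i'}\le m_{i,i'+1}$, $m_{i,i'}<m_{i+1,i'}$, with its $U_q(A_n)$-crystal structure. For $1\le a\le d$ put $g=\lfloor(a-1)/k'\rfloor$, $r=a-1-k'g$ and $i_a=k-g+r\in\{1,\dots,n\}$. Let $B_0=\{\overline b\}$ where $\overline b$ is the tableau with $m_{i,i'}=i$, $B_a=\bigcup_{n\ge0}\tilde f_{i_a}^nB_{a-1}\setminus\{0\}$, $b_0=\overline b$ and $b_a=\tilde f_{i_a}^{\varphi_{i_a}(b_{a-1})}b_{a-1}$. Then for each $1\le a\le d$: (1) $B_a=\{(m_{i,i'})\in B: m_{i,i'}=i \text{ for all } i<k-g \text{ and all } i',\ m_{k-g,i'}\le k-g+r+1\text{ for all }i'\}$; (2) $b_a$ is the tableau with $m_{i,i'}=i$ for $i<k-g$, $m_{k-g,i'}=k-g+r+1$, and $m_{i,i'}=i+k'$ for $i>k-g$.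
   Context: The crystal structure on $B(l\bar\Lambda_k)$: for a single column ($l=1$), $\tilde e_j$ (resp. $\tilde f_j$) changes an entry $j+1$ to $j$ (resp. $j$ to $j+1$), giving $0$ if there is no such entry or the result is not strictly increasing; for general $l$, $B(l\bar\Lambda_k)$ is embedded in $B(\bar\Lambda_k)^{\otimes l}$ by sending a tableau to (column $l$)$\otimes\cdots\otimes$(column $1$), and the operators are the restrictions of those on the tensor product (Kashiwara's tensor product / signature rule). $\varphi_j(b)=\max\{n:\tilde f_j^nb\neq0\}$. (In the paper these $B_a,b_a$ are the sets $B^{(n+1)}_a$ and elements $b^{(n+1)}_a$ for the perfect crystal $B^{k,l}$ of type $A^{(1)}_n$ at $j=n+1$, where $i^{(n+1)}_a\equiv k-g+r$.) *)

From Stdlib Require Import ClassicalEpsilon.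
From mathcomp Require Import all_boot all_algebra.
Set Implicit Arguments. Unset Strict Implicit. Unset Printing Implicit Defensive.

(* A column is the sequence of its entries, top to bottom. *)

Definition col_f (j : nat) (c : seq nat) : option (seq nat) :=
  if j \in c then
    let c' := [seq (if x == j then j.+1 else x) | x <- c] in
    if sorted ltn c' then Some c' else None
  else None.

Definition col_e (j : nat) (c : seq nat) : option (seq nat) :=
  if j.+1 \in c then
    let c' := [seq (if x == j.+1 then j else x) | x <- c] in
    if sorted ltn c' then Some c' else None
  else None.

(* phi_j / eps_j of a column: a column admits at most one application of
   f_j (resp. e_j), so phi_j = [f_j c <> 0], eps_j = [e_j c <> 0]. *)
Definition col_phi (j : nat) (c : seq nat) : nat := if col_f j c is Some _ then 1 else 0.
Definition col_eps (j : nat) (c : seq nat) : nat := if col_e j c is Some _ then 1 else 0.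

(* [:: c1; c2; ...; cL] stands for c1 (x) (c2 (x) (... (x) cL)).
   phi(b1(x)b2) = phi(b2) + max(0, phi(b1) - eps(b2)),
   eps(b1(x)b2) = eps(b1) + max(0, eps(b2) - phi(b1)),
   f(b1(x)b2) = f b1 (x) b2 if phi(b1) > eps(b2), b1 (x) f b2 otherwise. *)
Fixpoint teps_aux (j : nat) (cs : seq (seq nat)) : nat :=
  match cs with
  | [::] => 0
  | c :: cs' => col_eps j c + (teps_aux j cs' - col_phi j c)
  end.

Fixpoint tf (j : nat) (cs : seq (seq nat)) : option (seq (seq nat)) :=
  match cs with
  | [::] => None
  | c :: cs' =>
      if col_phi j c > teps_aux j cs' then omap (fun c' => c' :: cs') (col_f j c)
      else omap (cons c) (tf j cs')
  end.

(* A tableau (m_{i,i'}) with 1<=i<=k, 1<=i'<=l is a matrix 'M[nat]_(k,l);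
   0-based row index i stands for the paper's row i+1 (same for columns).
   Entries are the paper's entries (in {1,...,n+1}). *)
Definition is_tab (n k l : nat) (A : 'M[nat]_(k, l)) : bool :=
  [&& [forall i, forall j, (1 <= A i j) && (A i j <= n.+1)],
      [forall i, forall j : 'I_l, forall j' : 'I_l,
         (j'.+1 == j :> nat) ==> (A i j' <= A i j)] &
      [forall i : 'I_k, forall i' : 'I_k, forall j,
         (i'.+1 == i :> nat) ==> (A i' j < A i j)]].

(* Reading: tableau |-> (column l) (x) ... (x) (column 1). *)
Definition cols_of (k l : nat) (A : 'M[nat]_(k, l)) : seq (seq nat) :=
  [seq [seq A i j | i <- enum 'I_k] | j <- rev (enum 'I_l)].

Definition mx_of_cols (k l : nat) (cs : seq (seq nat)) : 'M[nat]_(k, l) :=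
  \matrix_(i < k, j < l) nth 0 (nth [::] cs (l.-1 - j)) i.

Definition tab_f (k l : nat) (j : nat) (A : 'M[nat]_(k, l)) : option 'M[nat]_(k, l) :=
  omap (@mx_of_cols k l) (tf j (cols_of A)).

(* f_j^m (None plays the role of 0). *)
Fixpoint iterf (k l : nat) (j m : nat) (A : 'M[nat]_(k, l)) : option 'M[nat]_(k, l) :=
  match m with
  | 0 => Some A
  | m'.+1 => obind (@tab_f k l j) (iterf j m' A)
  end.

Definition phi_tab (k l : nat) (j : nat) (A : 'M[nat]_(k, l)) : nat :=
  epsilon (inhabits 0%N)
    (fun m => iterf j m A <> None /\ forall m', iterf j m' A <> None -> m' <= m).

Definition bbar (k l : nat) : 'M[nat]_(k, l) := \matrix_(i < k, j < l) i.+1.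

Definition kp (n k : nat) : nat := n.+1 - k.
Definition gidx (n k a : nat) : nat := a.-1 %/ kp n k.
Definition ridx (n k a : nat) : nat := a.-1 - kp n k * gidx n k a.
Definition iidx (n k a : nat) : nat := k - gidx n k a + ridx n k a.

Fixpoint Bset (n k l : nat) (a : nat) (A : 'M[nat]_(k, l)) : Prop :=
  match a with
  | 0 => A = bbar k l
  | a'.+1 => exists (m : nat) (A0 : 'M[nat]_(k, l)),
      Bset n a' A0 /\ iterf (iidx n k a) m A0 = Some A
  end.

(* b_0 = bbar, b_a = f_{i_a}^{phi_{i_a}(b_{a-1})} b_{a-1}.
   (The default in odflt is never used: f^phi b <> 0 by definition of phi.) *)
Fixpoint bseq_a (n k l : nat) (a : nat) : 'M[nat]_(k, l) :=
  match a with
  | 0 => bbar k l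
  | a'.+1 =>
      let b := bseq_a n k l a' in
      let j := iidx n k a in
      odflt b (iterf j (phi_tab j b) b)
  end.

Definition b_expected (n k l a : nat) : 'M[nat]_(k, l) :=
  \matrix_(i < k, j < l)
    (if i.+1 < k - gidx n k a then i.+1
     else if i.+1 == k - gidx n k a then k - gidx n k a + ridx n k a + 1
     else i.+1 + kp n k).

(* Write P(p, u) for the tableaux whose rows above row p are those of bbar and
   whose row-p entries are at most u; part (1) says B_a = P(k-g, k-g+r+1).  For
   p <= j = i_a, the operator f_j only turns entries j into j+1, so the
   f_j-orbit of P(p, j) stays in P(p, j+1).  Conversely, lowering an element of
   P(p, j+1) by e_j as far as possible stays in P(p, j+1) and ends in P(p, j):
   there eps_j vanishes on the first tensor factor (the last column), which
   excludes an entry j+1 in row p.  Passing from a to a+1 raises u by one,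
   except when r wraps around, where P(p+1, p+1+k') = P(p, p) because every
   entry of row i of a tableau lies between i and i+k'.
   For part (2), b_{a-1} has l equal columns c with f_j c = c' and
   phi_j(c) = 1, eps_j(c) = phi_j(c') = 0, so by the signature rule
   phi_j(b_{a-1}) = l and f_j^l replaces every column c by c'. *)

From Stdlib Require Import ClassicalEpsilon.
From mathcomp Require Import all_boot all_algebra zify.
Set Implicit Arguments. Unset Strict Implicit. Unset Printing Implicit Defensive.

Lemma nth_add_sorted s i d : sorted ltn s -> i + d < size s ->
  nth 0 s i + d <= nth 0 s (i + d).
Proof.
move=> /(sortedP 0) ss; elim: d => [|d IH] lt_s; first by rewrite !addn0.
have := ss (i + d); rewrite -addnS => /(_ lt_s).
have lt_d : i + d < size s by lia.
have := IH lt_d; rewrite addnS; lia.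
Qed.

Lemma nth_succ_sorted s i i' : sorted ltn s -> i < size s -> i' < size s ->
  (nth 0 s i).+1 = nth 0 s i' -> i' = i.+1.
Proof.
move=> ss lt_i lt_i'; case: (ltngtP i i') => [lt_ii'|lt_i'i|<-] e; last by lia.
- have := @nth_add_sorted s i (i' - i) ss; rewrite subnKC; [lia|exact: ltnW].
- have := @nth_add_sorted s i' (i - i') ss; rewrite subnKC; [lia|exact: ltnW].
Qed.

Section Column.
Variable j : nat.

Definition raise x := if x == j then j.+1 else x.
Definition lower x := if x == j.+1 then j else x.

Lemma raise_j : raise j = raise j.+1.
Proof. by rewrite /raise eqxx ifN //; lia. Qed.

Lemma lower_j : lower j = lower j.+1.
Proof. by rewrite /lower eqxx ifN //; lia. Qed.

Lemma leq_raise x : x <= raise x.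
Proof. by rewrite /raise; case: eqP => // ->. Qed.

Lemma raise_notin s : j \notin map raise s.
Proof. by apply/mapP => -[x _]; rewrite /raise; case: eqP; lia. Qed.

Lemma lower_notin s : j.+1 \notin map lower s.
Proof. by apply/mapP => -[x _]; rewrite /lower; case: eqP; lia. Qed.

Lemma lower_in s : j.+1 \in s -> j \in map lower s.
Proof. by move=> s_j1; apply/mapP; exists j.+1; rewrite /lower ?eqxx. Qed.

Lemma raise_lowerK s : j \notin s -> map raise (map lower s) = s.
Proof.
move=> s_j; rewrite -map_comp -[RHS]map_id; apply/eq_in_map => x s_x /=.
rewrite /raise /lower; case: (x =P j.+1) => [->|_]; first by rewrite eqxx.
by case: eqP => // e; rewrite -e s_x in s_j.
Qed.

Lemma sorted_raise s : sorted ltn s -> j.+1 \notin s -> sorted ltn (map raise s).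
Proof.
move=> ss s_j1; apply: (homo_sorted_in (P := mem s)) ss; last exact/allP.
move=> x y _ s_y lt_xy; have y_ne : y != j.+1 by apply: contraNneq s_j1 => <-.
by rewrite /raise; case: eqP; case: eqP; lia.
Qed.

Lemma sorted_lower s : sorted ltn s -> j \notin s -> sorted ltn (map lower s).
Proof.
move=> ss s_j; apply: (homo_sorted_in (P := mem s)) ss; last exact/allP.
move=> x y s_x _ lt_xy; have x_ne : x != j by apply: contraNneq s_j => <-.
by rewrite /lower; case: eqP; case: eqP; lia.
Qed.

Lemma merge_not_sorted (f : nat -> nat) s : sorted ltn s -> j \in s -> j.+1 \in s ->
  f j = f j.+1 -> ~~ sorted ltn (map f s).
Proof.
move=> ss /(nthP 0) [i lt_i s_i] /(nthP 0) [i' lt_i' s_i'] f_eq.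
have ei' : i' = i.+1 by apply: nth_succ_sorted ss lt_i lt_i' _; rewrite s_i s_i'.
subst i'; apply/negP => /(sortedP 0) /(_ i); rewrite size_map => /(_ lt_i').
by rewrite !(nth_map 0) // s_i s_i' f_eq; lia.
Qed.

Lemma col_fE c : sorted ltn c ->
  col_f j c = if (j \in c) && (j.+1 \notin c) then Some (map raise c) else None.
Proof.
rewrite /col_f -/(map raise c) => sc.
case: (boolP (j \in c)) => //= c_j; case: (boolP (j.+1 \in c)) => /= c_j1.
- by rewrite ifN // (merge_not_sorted sc c_j c_j1 raise_j).
- by rewrite sorted_raise.
Qed.

Lemma col_eE c : sorted ltn c ->
  col_e j c = if (j.+1 \in c) && (j \notin c) then Some (map lower c) else None.
Proof.
rewrite /col_e -/(map lower c) => sc.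
case: (boolP (j.+1 \in c)) => //= c_j1; case: (boolP (j \in c)) => /= c_j.
- by rewrite ifN // (merge_not_sorted sc c_j c_j1 lower_j).
- by rewrite sorted_lower.
Qed.

Lemma col_phiE c : sorted ltn c -> col_phi j c = (j \in c) && (j.+1 \notin c).
Proof. by move=> sc; rewrite /col_phi col_fE //; case: ifP. Qed.

Lemma col_epsE c : sorted ltn c -> col_eps j c = (j.+1 \in c) && (j \notin c).
Proof. by move=> sc; rewrite /col_eps col_eE //; case: ifP. Qed.

Lemma col_phi_le1 c : col_phi j c <= 1.
Proof. by rewrite /col_phi; case: col_f. Qed.

End Column.

Section Tensor.
Variable j : nat.
Implicit Types cs : seq (seq nat).

Lemma tf_someE cs cs' : all (sorted ltn) cs -> tf j cs = Some cs' ->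
  exists xs c ys, [/\ cs = xs ++ c :: ys, cs' = xs ++ map (raise j) c :: ys,
    (j \in c) && (j.+1 \notin c), teps_aux j ys = 0 &
    forall xs' x, xs = rcons xs' x -> col_phi j x = 0].
Proof.
elim: cs cs' => [|c0 cs IH] cs' //= /andP [sc0 scs].
case: ltnP => [phi_gt|phi_le].
  rewrite col_fE //; case: ifP => //= c0_j [<-].
  exists [::], c0, cs; split => // [|[|? ?] ? //].
  by have := col_phi_le1 j c0; lia.
case E: (tf j cs) => [cs1|] //= [<-].
have [xs [c [ys [ecs -> c_jj1 teps0 last_phi]]]] := IH _ scs E.
have sc : sorted ltn c by move: scs; rewrite ecs all_cat /= => /and3P [].
rewrite ecs in phi_le; exists (c0 :: xs), c, ys; split; rewrite ?ecs // => xs' x.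
case: xs' => [|z xs'] [ex e]; last exact: last_phi e.
case/andP: c_jj1 => c_j _.
by move: phi_le; rewrite -ex e /= teps0 (col_epsE j sc) c_j /=; lia.
Qed.

Lemma tf_entry cs cs' : all (sorted ltn) cs -> tf j cs = Some cs' -> forall t i,
  nth 0 (nth [::] cs' t) i = nth 0 (nth [::] cs t) i \/
  nth 0 (nth [::] cs t) i = j /\ nth 0 (nth [::] cs' t) i = j.+1.
Proof.
move=> scs tf_cs t i; have [xs [c [ys [-> -> _ _ _]]]] := tf_someE scs tf_cs.
rewrite !nth_cat; case: ltnP => _; first by left.
case: (t - size xs) => [|t'] /=; last by left.
case: (ltnP i (size c)) => [lt_ic|le_ci]; last by rewrite !nth_default ?size_map //; left.
by rewrite (nth_map 0) // /raise; case: eqP; [right|left].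
Qed.

Lemma tf_preimage cs : all (sorted ltn) cs -> 0 < teps_aux j cs ->
  exists cs0, [/\ tf j cs0 = Some cs, teps_aux j cs0 = (teps_aux j cs).-1 &
    all (sorted ltn) cs0].
Proof.
elim: cs => [|c cs IH] //= /andP [sc scs] teps_gt.
case: (leqP (teps_aux j cs) (col_phi j c)) => [teps_le|teps_gt'].
  have /andP [c_j1 c_j] : (j.+1 \in c) && (j \notin c).
    by move: teps_gt teps_le; rewrite col_epsE //; case: (_ && _) => //=; lia.
  have phi_c : col_phi j c = 0 by rewrite col_phiE // (negbTE c_j).
  have eps_c : col_eps j c = 1 by rewrite col_epsE // c_j1 c_j.
  set c0 := map (lower j) c.
  have sc0 : sorted ltn c0 by apply: sorted_lower.
  have c0_j : j \in c0 := lower_in c_j1.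
  have c0_j1 : j.+1 \notin c0 := lower_notin j c.
  have phi_c0 : col_phi j c0 = 1 by rewrite col_phiE // c0_j c0_j1.
  have eps_c0 : col_eps j c0 = 0 by rewrite col_epsE // (negbTE c0_j1).
  exists (c0 :: cs); rewrite /= sc0 scs phi_c0 eps_c0 eps_c phi_c; split => //; last by lia.
  by rewrite ifT ?col_fE ?c0_j ?c0_j1 ?raise_lowerK //; lia.
have [cs0 [tf_cs0 teps_cs0 scs0]] := IH scs (leq_ltn_trans (leq0n _) teps_gt').
exists (c :: cs0); split => /=.
- by rewrite ifN ?tf_cs0 // -leqNgt teps_cs0; lia.
- by rewrite teps_cs0; lia.
- by rewrite sc.
Qed.

Section Homogeneous.
Variables c c' : seq nat.
Hypotheses (fc : col_f j c = Some c') (phi_c : col_phi j c = 1) (eps_c : col_eps j c = 0)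
  (phi_c' : col_phi j c' = 0).

Lemma teps_nseq t : teps_aux j (nseq t c) = 0.
Proof. by elim: t => //= t ->; rewrite eps_c. Qed.

Lemma tf_nseq_cat m t : tf j (nseq m c' ++ nseq t.+1 c) = Some (nseq m.+1 c' ++ nseq t c).
Proof. by elim: m => [|m /= ->]; rewrite /= ?phi_c ?teps_nseq ?fc ?phi_c'. Qed.

Lemma tf_nseq_none t : tf j (nseq t c') = None.
Proof. by elim: t => //= t ->; rewrite phi_c'. Qed.

End Homogeneous.

End Tensor.

Lemma sorted_cat_cons_replace (T : Type) (R : rel T) xs c c' ys :
  sorted R (xs ++ c :: ys) ->
  (forall xs' x, xs = rcons xs' x -> R x c -> R x c') ->
  (forall y ys', ys = y :: ys' -> R c y -> R c' y) ->
  sorted R (xs ++ c' :: ys).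
Proof.
rewrite !sorted_cat_cons => /andP [sxs pys] left right; apply/andP; split.
  case/lastP: xs sxs left => [|xs x] // sxs left; move: sxs.
  rewrite -!cats1 -!catA !sorted_cat_cons /= !andbT => /andP [-> Rxc].
  exact: left Rxc.
case: ys pys right => [|y ys] //= /andP [Rcy ->] right.
by rewrite (right y ys).
Qed.

Section ColumnLists.
Variables n k : nat.
Implicit Types (c : seq nat) (cs : seq (seq nat)).

Definition col_ok (c : seq nat) :=
  [&& size c == k, sorted ltn c & all (fun x => 0 < x <= n.+1) c].

(* [cols_of] lists the columns from right to left, so the rows of a tableau
   weakly increase iff its column list is [sorted col_ge]. *)
Definition col_ge (x y : seq nat) := all (fun i => nth 0 y i <= nth 0 x i) (iota 0 k).

Definition tab_ok (l : nat) (cs : seq (seq nat)) :=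
  [&& size cs == l, all col_ok cs & sorted col_ge cs].

Lemma col_geP x y : reflect (forall i, i < k -> nth 0 y i <= nth 0 x i) (col_ge x y).
Proof.
by apply: (iffP allP) => le_xy i; [move=> lt_ik|rewrite mem_iota => /andP [_ lt_ik]];
  apply: le_xy; rewrite ?mem_iota.
Qed.

Lemma col_ge_refl : reflexive col_ge.
Proof. by move=> x; apply/col_geP. Qed.

Lemma col_ge_trans : transitive col_ge.
Proof.
move=> y x z /col_geP le_xy /col_geP le_yz; apply/col_geP => i lt_ik.
exact: leq_trans (le_yz i lt_ik) (le_xy i lt_ik).
Qed.

Variable j : nat.

Lemma col_ok_raise c : j <= n -> col_ok c -> j.+1 \notin c ->
  col_ok (map (raise j) c).
Proof.
move=> j_le /and3P [sz sc /allP range] c_j1; rewrite /col_ok size_map sz sorted_raise //=.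
by apply/allP => _ /mapP [x c_x ->]; have := range x c_x; rewrite /raise; case: eqP; lia.
Qed.

Lemma col_ok_raise_inv c : 0 < j -> sorted ltn c -> col_ok (map (raise j) c) ->
  col_ok c.
Proof.
move=> j_gt0 sc /and3P [sz _ /allP range]; rewrite /col_ok -(size_map (raise j)) sz sc /=.
apply/allP => x c_x; have := range _ (map_f (raise j) c_x).
by rewrite /raise; case: eqP; lia.
Qed.

Lemma col_ge_raise_left (x c : seq nat) : col_ok x -> col_phi j x = 0 -> col_ok c ->
  j.+1 \notin c -> col_ge x c -> col_ge x (map (raise j) c).
Proof.
move=> /and3P [/eqP sz_x sx _] phi0 /and3P [/eqP sz_c sc _] c_j1 /col_geP le_xc.
apply/col_geP => i lt_ik; rewrite (nth_map 0) ?sz_c // /raise.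
case: eqP => [c_i|_]; last exact: le_xc.
have := le_xc i lt_ik; rewrite c_i leq_eqVlt => /predU1P [x_i|//].
have x_j : j \in x by rewrite x_i mem_nth ?sz_x.
have /(nthP 0) [i' lt_i' x_i'] : j.+1 \in x.
  by move: phi0; rewrite col_phiE // x_j; case: (j.+1 \in x).
have ei' : i' = i.+1 by apply: nth_succ_sorted sx _ lt_i' _; rewrite ?sz_x -?x_i.
subst i'; have lt_i1 : i.+1 < k by rewrite -sz_x.
have := le_xc _ lt_i1; rewrite x_i' => le_c.
have := (sortedP 0 sc) i; rewrite sz_c c_i => /(_ lt_i1) lt_c.
have c_i1 : nth 0 c i.+1 = j.+1 by lia.
by move: c_j1; rewrite -c_i1 mem_nth ?sz_c.
Qed.

Lemma col_ge_raise_right (c y : seq nat) : size c = k -> col_ge c y ->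
  col_ge (map (raise j) c) y.
Proof.
move=> sz_c /col_geP le_cy; apply/col_geP => i lt_ik.
by rewrite (nth_map 0) ?sz_c //; apply: leq_trans (le_cy i lt_ik) (leq_raise j _).
Qed.

Lemma col_ge_raise_left_inv (x c : seq nat) : size c = k ->
  col_ge x (map (raise j) c) -> col_ge x c.
Proof.
move=> sz_c /col_geP le_xc; apply/col_geP => i lt_ik.
by have := le_xc i lt_ik; rewrite (nth_map 0) ?sz_c //; apply: leq_trans (leq_raise j _).
Qed.

Lemma col_ge_raise_right_inv (c y : seq nat) : col_ok (map (raise j) c) -> col_ok y ->
  col_eps j y = 0 -> col_ge (map (raise j) c) y -> col_ge c y.
Proof.
move=> /and3P [/eqP sz_c' sc' _] /and3P [/eqP sz_y sy _] eps0 /col_geP le_cy.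
have sz_c : size c = k by rewrite -sz_c' size_map.
apply/col_geP => i lt_ik; have := le_cy i lt_ik; rewrite (nth_map 0) ?sz_c // /raise.
case: eqP => [c_i|_ //]; rewrite c_i leq_eqVlt ltnS => /predU1P [y_i|//].
have y_j1 : j.+1 \in y by rewrite -y_i mem_nth ?sz_y.
have /(nthP 0) [i' lt_i' y_i'] : j \in y.
  by move: eps0; rewrite col_epsE // y_j1; case: (j \in y).
have ei : i = i'.+1 by apply: nth_succ_sorted sy lt_i' _ _; rewrite ?sz_y ?y_i ?y_i'.
subst i; have lt_i'k : i' < k by lia.
have := le_cy _ lt_i'k; rewrite y_i' (nth_map 0) ?sz_c // => le_c'.
have := (sortedP 0 sc') i'; rewrite sz_c' => /(_ lt_ik).
rewrite !(nth_map 0) ?sz_c // {2}/raise c_i eqxx => lt_c'.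
have c'_i' : raise j (nth 0 c i') = j by lia.
case/negP: (raise_notin j c); rewrite -[X in X \in _]c'_i'.
by rewrite map_f // mem_nth // sz_c.
Qed.

Lemma tf_tab_ok l cs cs' : j <= n -> tab_ok l cs -> tf j cs = Some cs' -> tab_ok l cs'.
Proof.
move=> j_le /and3P [/eqP sz ok_cs sorted_cs] tf_cs.
have scs : all (sorted ltn) cs by apply: sub_all ok_cs => c /and3P [].
have [xs [c [ys [ecs -> /andP [c_j c_j1] teps0 last_phi]]]] := tf_someE scs tf_cs.
move: ok_cs sorted_cs; rewrite ecs all_cat /= => /and3P [ok_xs ok_c ok_ys] sorted_cs.
have ok_c' := col_ok_raise j_le ok_c c_j1.
apply/and3P; split; first by rewrite -sz ecs !size_cat.
  by rewrite all_cat /= ok_xs ok_c' ok_ys.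
apply: sorted_cat_cons_replace sorted_cs _ _ => [xs' x exs|y ys' _].
  apply: col_ge_raise_left => //; last exact: last_phi exs.
  by move/allP: ok_xs; apply; rewrite exs mem_rcons mem_head.
by apply: col_ge_raise_right; move/and3P: ok_c => [/eqP].
Qed.

Lemma tf_tab_ok_inv l cs cs' : 0 < j -> all (sorted ltn) cs -> tab_ok l cs' ->
  tf j cs = Some cs' -> tab_ok l cs.
Proof.
move=> j_gt0 scs /and3P [/eqP sz ok_cs' sorted_cs'] tf_cs.
have [xs [c [ys [ecs ecs' _ teps0 _]]]] := tf_someE scs tf_cs.
have sc : sorted ltn c by move: scs; rewrite ecs all_cat /= => /and3P [].
move: ok_cs' sorted_cs'; rewrite ecs' all_cat /= => /and3P [ok_xs ok_c' ok_ys] sorted_cs'.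
have ok_c := col_ok_raise_inv j_gt0 sc ok_c'.
apply/and3P; split; first by rewrite -sz ecs ecs' !size_cat.
  by rewrite ecs all_cat /= ok_xs ok_c ok_ys.
rewrite ecs; apply: sorted_cat_cons_replace sorted_cs' _ _ => [xs' x _|y ys' eys].
  by apply: col_ge_raise_left_inv; move/and3P: ok_c => [/eqP].
apply: col_ge_raise_right_inv => //; first by move/allP: ok_ys; apply; rewrite eys mem_head.
by move: teps0; rewrite eys /=; lia.
Qed.

End ColumnLists.

Section Matrix.
Variables n k l : nat.
Implicit Types (A : 'M[nat]_(k, l)) (cs : seq (seq nat)).

Lemma size_cols_of A : size (cols_of A) = l.
Proof. by rewrite size_map size_rev size_enum_ord. Qed.

Lemma nth_cols_of A (jj : 'I_l) :
  nth [::] (cols_of A) (l.-1 - jj) = [seq A i jj | i <- enum 'I_k].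
Proof.
have lt_jl : l.-1 - jj < size (enum 'I_l) by rewrite size_enum_ord; have := ltn_ord jj; lia.
rewrite (nth_map jj) ?size_rev // nth_rev //; apply: eq_map => i.
congr (A i _); apply: val_inj; rewrite /= size_enum_ord nth_enum_ord;
  by have := ltn_ord jj; lia.
Qed.

Lemma nth_col A (jj : 'I_l) (i : 'I_k) : nth 0 [seq A i jj | i <- enum 'I_k] i = A i jj.
Proof. by rewrite (nth_map i) ?size_enum_ord // nth_ord_enum. Qed.

Lemma cols_ofE A (i : 'I_k) (jj : 'I_l) :
  nth 0 (nth [::] (cols_of A) (l.-1 - jj)) i = A i jj.
Proof. by rewrite nth_cols_of nth_col. Qed.

Lemma cols_of_index t : t < l -> exists jj : 'I_l, t = l.-1 - jj.
Proof.
move=> lt_tl; have lt_l : l.-1 - t < l by lia.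
by exists (Ordinal lt_l) => /=; lia.
Qed.

Lemma cols_ofK : cancel (@cols_of k l) (mx_of_cols k l).
Proof. by move=> A; apply/matrixP => i jj; rewrite mxE cols_ofE. Qed.

Lemma mx_of_colsK cs : size cs = l -> all (fun c => size c == k) cs ->
  cols_of (mx_of_cols k l cs) = cs.
Proof.
move=> sz sz_cs; apply: (eq_from_nth (x0 := [::])); first by rewrite size_cols_of.
move=> t; rewrite size_cols_of => /cols_of_index [jj ->]; rewrite nth_cols_of.
have lt_jl : l.-1 - jj < size cs by rewrite sz; have := ltn_ord jj; lia.
have /eqP sz_c := allP sz_cs _ (mem_nth [::] lt_jl).
apply: (eq_from_nth (x0 := 0)); first by rewrite size_map size_enum_ord.
move=> i; rewrite size_map size_enum_ord => lt_ik.
by rewrite (nth_col _ _ (Ordinal lt_ik)) mxE.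
Qed.

Lemma is_tab_cols_of A : is_tab n A -> tab_ok n k l (cols_of A).
Proof.
case/and3P => /forallP range /forallP row /forallP col.
rewrite /tab_ok size_cols_of eqxx /=; apply/andP; split.
  apply/allP => _ /mapP [jj _ ->]; rewrite /col_ok size_map size_enum_ord eqxx /=.
  apply/andP; split; last by apply/allP => _ /mapP [i _ ->]; move/forallP: (range i).
  apply/(sortedP 0) => i; rewrite size_map size_enum_ord => lt_i1.
  have lt_i : i < k by lia.
  rewrite (nth_col _ _ (Ordinal lt_i)) (nth_col _ _ (Ordinal lt_i1)).
  move/forallP: (col (Ordinal lt_i1)) => /(_ (Ordinal lt_i)) /forallP /(_ jj).
  by move/implyP; apply.
apply/(sortedP [::]) => t; rewrite size_cols_of => lt_t1.
have [jj ejj] := cols_of_index (ltnW lt_t1); have [jj' ejj'] := cols_of_index lt_t1.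
apply/col_geP => i lt_ik; rewrite ejj' ejj !(cols_ofE A (Ordinal lt_ik)).
move/forallP: (row (Ordinal lt_ik)) => /(_ jj) /forallP /(_ jj') /implyP; apply.
by apply/eqP; have := ltn_ord jj; have := ltn_ord jj'; lia.
Qed.

Lemma cols_of_is_tab A : tab_ok n k l (cols_of A) -> is_tab n A.
Proof.
case/and3P => _ /allP ok_cols /(sortedP [::]) sorted_cols.
have ok_col jj : col_ok n k [seq A i jj | i <- enum 'I_k].
  rewrite -nth_cols_of; apply/ok_cols/mem_nth.
  by rewrite size_cols_of; have := ltn_ord jj; lia.
apply/and3P; split.
- apply/forallP => i; apply/forallP => jj; have /and3P [_ _ /allP range] := ok_col jj.
  by rewrite -(nth_col A jj i); apply/range/mem_nth; rewrite size_map size_enum_ord.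
- apply/forallP => i; apply/forallP => jj; apply/forallP => jj'; apply/implyP => /eqP e.
  have lt_t : (l.-1 - jj).+1 < size (cols_of A).
    by rewrite size_cols_of; have := ltn_ord jj; lia.
  have := sorted_cols _ lt_t => /col_geP /(_ i (ltn_ord i)).
  have -> : (l.-1 - jj).+1 = l.-1 - jj' by have := ltn_ord jj; lia.
  by rewrite !cols_ofE.
- apply/forallP => i; apply/forallP => i'; apply/forallP => jj; apply/implyP => /eqP e.
  have /and3P [_ /(sortedP 0) sc _] := ok_col jj.
  have := sc i'; rewrite size_map size_enum_ord e => /(_ (ltn_ord i)).
  by rewrite (nth_col A jj i') (nth_col A jj i).
Qed.

End Matrix.

Section MatrixCrystal.
Variables n k l j : nat.
Implicit Types (A : 'M[nat]_(k, l)) (cs : seq (seq nat)).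

Lemma tab_ok_sorted cs : tab_ok n k l cs -> all (sorted ltn) cs.
Proof. by case/and3P => _ ok _; apply: sub_all ok => c /and3P []. Qed.

Lemma tab_ok_mx_of_colsK cs : tab_ok n k l cs -> cols_of (mx_of_cols k l cs) = cs.
Proof.
case/and3P => /eqP sz ok _; apply: mx_of_colsK => //.
by apply: sub_all ok => c /and3P [].
Qed.

Lemma tab_f_is_tab A A' : j <= n -> is_tab n A -> tab_f j A = Some A' -> is_tab n A'.
Proof.
rewrite /tab_f => j_le /is_tab_cols_of ok; case E: tf => [cs'|] //= [<-].
have ok' := tf_tab_ok j_le ok E.
by apply: cols_of_is_tab; rewrite tab_ok_mx_of_colsK.
Qed.

Lemma tab_f_entry A A' : is_tab n A -> tab_f j A = Some A' ->
  forall i jj, A' i jj = A i jj \/ A i jj = j /\ A' i jj = j.+1.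
Proof.
rewrite /tab_f => /is_tab_cols_of ok; case E: tf => [cs'|] //= [<-] i jj.
by rewrite mxE -(cols_ofE A i jj); exact: tf_entry (tab_ok_sorted ok) E _ _.
Qed.

Lemma tab_f_preimage A : 0 < j -> is_tab n A -> 0 < teps_aux j (cols_of A) ->
  exists A0, [/\ is_tab n A0, tab_f j A0 = Some A &
    teps_aux j (cols_of A0) = (teps_aux j (cols_of A)).-1].
Proof.
move=> j_gt0 /is_tab_cols_of ok teps_gt.
have [cs0 [tf_cs0 teps_cs0 scs0]] := tf_preimage (tab_ok_sorted ok) teps_gt.
have ok0 := tf_tab_ok_inv j_gt0 scs0 ok tf_cs0.
exists (mx_of_cols k l cs0); rewrite /tab_f tab_ok_mx_of_colsK // tf_cs0 /= cols_ofK.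
by split => //; apply: cols_of_is_tab; rewrite tab_ok_mx_of_colsK.
Qed.

End MatrixCrystal.

Section TableauBounds.
Variables n k l : nat.
Implicit Types A : 'M[nat]_(k, l).

Lemma tab_col_ok A (jj : 'I_l) : is_tab n A -> col_ok n k [seq A i jj | i <- enum 'I_k].
Proof.
move=> /is_tab_cols_of /and3P [_ /allP ok _]; rewrite -nth_cols_of; apply/ok/mem_nth.
by rewrite size_cols_of; have := ltn_ord jj; lia.
Qed.

Lemma tab_entry_lb A (i : 'I_k) (jj : 'I_l) : is_tab n A -> i.+1 <= A i jj.
Proof.
move=> /(tab_col_ok jj) /and3P [/eqP sz sc /allP range].
have lt_ik : 0 + i < size [seq A i jj | i <- enum 'I_k] by rewrite sz add0n ltn_ord.
have := nth_add_sorted sc lt_ik; rewrite add0n (nth_col A jj i).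
have pos : 0 < nth 0 [seq A i jj | i <- enum 'I_k] 0.
  by case/andP: (range _ (mem_nth 0 (leq_ltn_trans (leq0n i) lt_ik))).
lia.
Qed.

Lemma tab_entry_ub A (i : 'I_k) (jj : 'I_l) : is_tab n A -> A i jj + (k - i.+1) <= n.+1.
Proof.
move=> /(tab_col_ok jj) /and3P [/eqP sz sc /allP range].
have lt_k : i + (k - i.+1) < size [seq A i jj | i <- enum 'I_k].
  by rewrite sz; have := ltn_ord i; lia.
have := nth_add_sorted sc lt_k; rewrite (nth_col A jj i).
have bound : nth 0 [seq A i jj | i <- enum 'I_k] (i + (k - i.+1)) <= n.+1.
  by case/andP: (range _ (mem_nth 0 lt_k)).
lia.
Qed.

Lemma tab_row_le A (i : 'I_k) (jj jj' : 'I_l) : is_tab n A -> jj <= jj' ->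
  A i jj <= A i jj'.
Proof.
move=> /is_tab_cols_of /and3P [_ _ sorted_cols] le_jj.
have mem_t (t : 'I_l) : l.-1 - t \in [pred t | t < size (cols_of A)].
  by rewrite inE size_cols_of; have := ltn_ord t; lia.
have := sorted_leq_nth (@col_ge_trans k) (@col_ge_refl k) [::] sorted_cols _ _
  (mem_t jj') (mem_t jj).
by rewrite leq_sub2l // => /(_ isT) /col_geP /(_ i (ltn_ord i)); rewrite !cols_ofE.
Qed.

End TableauBounds.

(* The set P(p, u); rows are 0-based, so row [i] is the paper's row [i.+1]. *)
Definition Btab (n k l p u : nat) (A : 'M[nat]_(k, l)) : Prop :=
  [/\ is_tab n A, (forall (i : 'I_k) (jj : 'I_l), i.+1 < p -> A i jj = i.+1) &
      (forall (i : 'I_k) (jj : 'I_l), i.+1 = p -> A i jj <= u)].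

Section Step.
Variables n k l : nat.
Implicit Types A : 'M[nat]_(k, l).

Lemma Btab_tab_f p j A A' : p <= j <= n -> Btab n p j.+1 A -> tab_f j A = Some A' ->
  Btab n p j.+1 A'.
Proof.
case/andP=> le_pj le_jn [tabA top row] tfA.
have entry := tab_f_entry tabA tfA.
split; first exact: tab_f_is_tab tfA.
  by move=> i jj lt_ip; have := top i jj lt_ip; case: (entry i jj) => [->|[-> _]] //; lia.
by move=> i jj e_ip; have := row i jj e_ip; case: (entry i jj) => [->|[_ ->]].
Qed.

Lemma Btab_iterf p j m A0 A : p <= j <= n -> Btab n p j A0 -> iterf j m A0 = Some A ->
  Btab n p j.+1 A.
Proof.
move=> le_pjn [tab0 top row]; elim: m A => [|m IH] A /=.
  by case=> <-; split => // i jj /(row i jj); apply: leqW.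
case E: (iterf j m A0) => [A1|] //= tfA1.
exact: Btab_tab_f le_pjn (IH _ E) tfA1.
Qed.

Lemma Btab_tab_f_inv p j A0 A : p <= j -> is_tab n A0 -> tab_f j A0 = Some A ->
  Btab n p j.+1 A -> Btab n p j.+1 A0.
Proof.
move=> le_pj tab0 tfA0 [_ top row]; have entry := tab_f_entry tab0 tfA0.
split => // i jj.
  by move=> lt_ip; have := top i jj lt_ip; case: (entry i jj) => [<-|[_ ->]] //; lia.
by move=> e_ip; have := row i jj e_ip; case: (entry i jj) => [->|[->]].
Qed.

(* An entry [j.+1] in row [p] propagates to the last column, the first tensor
   factor; as [eps_j] vanishes there, [j] sits right above it, in row [p-1],
   which however is frozen to [p-1 < j]. *)
Lemma Btab_eps0 p j A : 0 < l -> p <= j -> Btab n p j.+1 A ->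
  teps_aux j (cols_of A) = 0 -> Btab n p j A.
Proof.
move=> l_gt0 le_pj [tabA top row] teps0; split => // i jj e_ip.
have jl : l.-1 < l by rewrite prednK.
have le_last : A i jj <= A i (Ordinal jl).
  by apply: tab_row_le => //=; have := ltn_ord jj; lia.
rewrite leqNgt; apply/negP => gt_j.
have last_j1 : A i (Ordinal jl) = j.+1 by have := row i (Ordinal jl) e_ip; lia.
have /and3P [/eqP sz sc _] := tab_col_ok (Ordinal jl) tabA.
set c := [seq A i (Ordinal jl) | i <- enum 'I_k] in sz sc.
have head_c : nth [::] (cols_of A) 0 = c by rewrite /c -(nth_cols_of A (Ordinal jl)) subnn.
have eps_c : col_eps j c = 0.
  move: teps0 head_c; case: (cols_of A) => [|c0 cs] /=; last by move=> teps0 <-; lia.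
  by move=> _ <-; rewrite /col_eps /col_e.
have c_j1 : j.+1 \in c by rewrite -last_j1 -(nth_col A) mem_nth ?sz.
have /(nthP 0) [i' lt_i' c_i'] : j \in c.
  by move: eps_c; rewrite col_epsE // c_j1; case: (j \in c).
have ei : i = i'.+1 :> nat.
  by apply: nth_succ_sorted sc lt_i' _ _; rewrite ?sz // c_i' (nth_col A) last_j1.
have lt_i'k : i' < k by rewrite -sz.
have := top (Ordinal lt_i'k) (Ordinal jl); rewrite /= -(nth_col A) c_i'; lia.
Qed.

Lemma Btab_iterf_inv p j A : 0 < l -> 0 < p -> p <= j <= n -> Btab n p j.+1 A ->
  exists m A0, Btab n p j A0 /\ iterf j m A0 = Some A.
Proof.
move=> l_gt0 p_gt0 /andP [le_pj le_jn].
move eps : (teps_aux j (cols_of A)) => e; elim: e A eps => [|e IH] A eps BA.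
  by exists 0, A; split => //; apply: Btab_eps0 BA eps.
have [tabA _ _] := BA.
have eps_gt0 : 0 < teps_aux j (cols_of A) by rewrite eps.
have [A1 [tab1 tfA1 eps1]] := tab_f_preimage (leq_trans p_gt0 le_pj) tabA eps_gt0.
rewrite eps /= in eps1.
have [m [A0 [BA0 itA0]]] := IH A1 eps1 (Btab_tab_f_inv le_pj tab1 tfA1 BA).
by exists m.+1, A0; rewrite /= itA0.
Qed.

End Step.

Lemma iterf_none_le k l j m m' (A : 'M[nat]_(k, l)) : m <= m' ->
  iterf j m A = None -> iterf j m' A = None.
Proof.
move=> le_mm' none_m; elim: m' le_mm' => [|m' IH]; first by rewrite leqn0 => /eqP <-.
by rewrite leq_eqVlt => /predU1P [<- //|/IH /= ->].
Qed.

Lemma phi_tabE k l j m (A : 'M[nat]_(k, l)) : iterf j m A <> None ->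
  iterf j m.+1 A = None -> phi_tab j A = m.
Proof.
move=> some_m none_m1.
have max_m : forall m', iterf j m' A <> None -> m' <= m.
  by move=> m' some_m'; rewrite leqNgt; apply/negP => /iterf_none_le /(_ none_m1).
pose P m := iterf j m A <> None /\ forall m', iterf j m' A <> None -> m' <= m.
have [some_phi max_phi] := epsilon_spec (inhabits 0) P (ex_intro P m (conj some_m max_m)).
by apply/eqP; rewrite eqn_leq; apply/andP; split; [apply: max_m | apply: max_phi].
Qed.

(* [bshape n k l (k-g) (k-g+r+1)] is [b_expected n k l a] by definition. *)
Definition bentry (n k p u i : nat) : nat :=
  if i.+1 < p then i.+1 else if i.+1 == p then u else i.+1 + kp n k.

Definition bshape (n k l p u : nat) : 'M[nat]_(k, l) :=
  \matrix_(i < k, jj < l) bentry n k p u i.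

Definition bcol (n k p u : nat) : seq nat := [seq bentry n k p u i | i <- iota 0 k].

Lemma cols_of_bshape n k l p u : cols_of (bshape n k l p u) = nseq l (bcol n k p u).
Proof.
apply: (eq_from_nth (x0 := [::])); first by rewrite size_cols_of size_nseq.
move=> t; rewrite size_cols_of => lt_tl; have [jj ejj] := cols_of_index lt_tl.
rewrite nth_nseq lt_tl ejj nth_cols_of /bcol -val_enum_ord -map_comp.
by apply: eq_map => i /=; rewrite mxE.
Qed.

Section HighestWeight.
Variables n k l p j : nat.
Hypotheses (p_gt0 : 0 < p) (le_pk : p <= k) (le_pj : p <= j) (lt_j : j < p + kp n k).

Let c := bcol n k p j.
Let c' := bcol n k p j.+1.

Lemma sorted_bcol u : p <= u <= p + kp n k -> sorted ltn (bcol n k p u).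
Proof.
move=> /andP [le_pu le_u]; apply: homo_sorted (iota_ltn_sorted 0 k) => x y lt_xy.
by rewrite /bentry; do ![case: ifP => ?]; lia.
Qed.

Lemma mem_bcol u x : x \in bcol n k p u -> [\/ x < p, x = u | p + kp n k < x].
Proof.
case/mapP => i _ ->; rewrite /bentry; case: ifP => lt_ip; first by constructor 1.
by case: ifP => e_ip; [constructor 2 | constructor 3; lia].
Qed.

Lemma bcol_j : j \in c.
Proof.
have lt_pk : p.-1 < k by lia.
apply/mapP; exists p.-1; first by rewrite mem_iota; lia.
by rewrite /bentry prednK // ltnn eqxx.
Qed.

Lemma bcol_j1 : j.+1 \notin c.
Proof. by apply/negP => /mem_bcol []; lia. Qed.

Lemma bcol'_j : j \notin c'.
Proof. by apply/negP => /mem_bcol []; lia. Qed.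

Lemma map_raise_bcol : map (raise j) c = c'.
Proof.
rewrite /c /c' /bcol -map_comp; apply: eq_map => i /=.
rewrite /raise /bentry; case: (ltnP i.+1 p) => ? /=; case: (i.+1 =P p) => ? /=;
  by case: eqP; lia.
Qed.

Lemma col_f_bcol : col_f j c = Some c'.
Proof.
by rewrite col_fE ?sorted_bcol ?bcol_j ?bcol_j1 ?map_raise_bcol //; lia.
Qed.

Let phi_c : col_phi j c = 1. Proof. by rewrite /col_phi col_f_bcol. Qed.
Let eps_c : col_eps j c = 0. Proof. by rewrite /col_eps /col_e (negbTE bcol_j1). Qed.
Let phi_c' : col_phi j c' = 0. Proof. by rewrite /col_phi /col_f (negbTE bcol'_j). Qed.

Lemma size_bcol u : size (bcol n k p u) = k.
Proof. by rewrite size_map size_iota. Qed.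

Lemma iterf_bshape m : m <= l ->
  iterf j m (bshape n k l p j) = Some (mx_of_cols k l (nseq m c' ++ nseq (l - m) c)).
Proof.
elim: m => [_|m IH lt_ml]; first by rewrite /= subn0 -cols_of_bshape cols_ofK.
rewrite /= IH 1?ltnW // /= /tab_f mx_of_colsK; last first.
- by rewrite all_cat !all_nseq !size_bcol eqxx !orbT.
- by rewrite size_cat !size_nseq; lia.
by rewrite (_ : l - m = (l - m.+1).+1) ?(tf_nseq_cat col_f_bcol) //; lia.
Qed.

Lemma iterf_bshape_none : iterf j l.+1 (bshape n k l p j) = None.
Proof.
rewrite /= iterf_bshape // subnn cats0 /= /tab_f mx_of_colsK ?(tf_nseq_none phi_c') //.
- by rewrite size_nseq.
- by rewrite all_nseq size_bcol eqxx orbT.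
Qed.

Lemma bshape_step : let b := bshape n k l p j in
  odflt b (iterf j (phi_tab j b) b) = bshape n k l p j.+1.
Proof.
have phi_l : phi_tab j (bshape n k l p j) = l.
  by apply: phi_tabE iterf_bshape_none; rewrite iterf_bshape.
by rewrite /= phi_l iterf_bshape // subnn cats0 -cols_of_bshape cols_ofK.
Qed.

End HighestWeight.

Section Shapes.
Variables n k l : nat.
Implicit Types A : 'M[nat]_(k, l).

Lemma is_tab_bbar : k <= n.+1 -> is_tab n (bbar k l).
Proof.
move=> le_kn; apply/and3P; split; apply/forallP => i.
- by apply/forallP => jj; rewrite mxE; have := ltn_ord i; lia.
- by do 2 apply/forallP => ?; rewrite !mxE leqnn implybT.
- by do 2 apply/forallP => ?; apply/implyP => /eqP e; rewrite !mxE; lia.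
Qed.

Lemma Btab_bbar A : k <= n -> A = bbar k l <-> Btab n k k A.
Proof.
move=> le_kn; split => [->|[tabA top row]].
  split; first by apply: is_tab_bbar; lia.
    by move=> i jj _; rewrite mxE.
  by move=> i jj e_ik; rewrite mxE; lia.
apply/matrixP => i jj; rewrite mxE; case: (ltnP i.+1 k) => [/top //|le_ki].
have := row i jj; have := tab_entry_lb i jj tabA; have := ltn_ord i; lia.
Qed.

Lemma bshape_bbar : bshape n k l k k = bbar k l.
Proof.
apply/matrixP => i jj; rewrite !mxE /bentry; have lt_ik := ltn_ord i.
by case: (ltnP i.+1 k) => // le_ki; case: eqP => //; lia.
Qed.

Lemma Btab_shift A p : 0 < p < k -> k <= n ->
  Btab n (p + 1) (p + 1 + kp n k) A <-> Btab n p p A.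
Proof.
move=> /andP [p_gt0 lt_pk] le_kn; split => [[tabA top row]|[tabA top row]].
  split => // i jj e_ip; last by rewrite top; lia.
  by apply: top; lia.
split => // i jj e_ip; last by have := tab_entry_ub i jj tabA; rewrite /kp; lia.
case: (ltnP i.+1 p) => [/top //|le_pi]; have := row i jj; have := tab_entry_lb i jj tabA.
lia.
Qed.

Lemma bshape_shift p : 0 < p < k ->
  bshape n k l (p + 1) (p + 1 + kp n k) = bshape n k l p p.
Proof.
move=> /andP [p_gt0 lt_pk]; apply/matrixP => i jj; rewrite !mxE /bentry.
by case: (ltnP i.+1 p) => ?; case: (ltnP i.+1 (p + 1)) => ?;
  case: (i.+1 =P p) => ?; case: (i.+1 =P p + 1) => ?; lia.
Qed.

End Shapes.

Lemma gidx_ridx n k a g r : a.-1 = g * kp n k + r -> r < kp n k ->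
  gidx n k a = g /\ ridx n k a = r.
Proof.
move=> ea lt_r; have kp_gt0 : 0 < kp n k by lia.
have eg : gidx n k a = g by rewrite /gidx ea divnMDl // divn_small // addn0.
by split => //; rewrite /ridx eg ea; lia.
Qed.

Lemma Bset_succ n k l a p j : 0 < l -> 0 < p <= k -> p <= j < p + kp n k ->
  iidx n k a.+1 = j ->
  (forall A : 'M[nat]_(k, l), Bset n a A <-> Btab n p j A) ->
  bseq_a n k l a = bshape n k l p j ->
  (forall A : 'M[nat]_(k, l), Bset n a.+1 A <-> Btab n p j.+1 A) /\
  bseq_a n k l a.+1 = bshape n k l p j.+1.
Proof.
move=> l_gt0 /andP [p_gt0 le_pk] /andP [le_pj lt_j] ij BaE ba.
have le_pjn : p <= j <= n by rewrite le_pj /=; move: lt_j; rewrite /kp; lia.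
split=> [A|]; last by rewrite /= ij ba; apply: bshape_step.
split=> [[m [A0 [BaA0 itA0]]]|BA].
  by rewrite ij in itA0; apply: Btab_iterf le_pjn (proj1 (BaE A0) BaA0) itA0.
have [m [A0 [BA0 itA0]]] := Btab_iterf_inv l_gt0 p_gt0 le_pjn BA.
by exists m, A0; rewrite ij; split => //; apply/BaE.
Qed.

Lemma Bset_bseq_shape n k l a g r : 0 < l -> 0 < k <= n -> 0 < a <= k * kp n k ->
  a.-1 = g * kp n k + r -> r < kp n k ->
  (forall A : 'M[nat]_(k, l), Bset n a A <-> Btab n (k - g) (k - g + r + 1) A) /\
  bseq_a n k l a = bshape n k l (k - g) (k - g + r + 1).
Proof.
move=> l_gt0 /andP [k_gt0 le_kn]; have kp_gt0 : 0 < kp n k by rewrite /kp; lia.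
elim: a g r => [|a IH] g r // /andP [_ le_a] ea lt_r.
have [eg er] := gidx_ridx ea lt_r.
have lt_gk : g < k by rewrite -(ltn_pmul2r kp_gt0); lia.
have prev : (forall A : 'M[nat]_(k, l), Bset n a A <-> Btab n (k - g) (k - g + r) A) /\
            bseq_a n k l a = bshape n k l (k - g) (k - g + r).
  case: a IH le_a ea {eg er} => [|a] IH le_a ea.
    have [-> ->] : g = 0 /\ r = 0 by nia.
    by rewrite subn0 addn0 bshape_bbar; split => // A; apply: Btab_bbar.
  case: (posnP r) => [r0|r_gt0].
    case: g ea lt_gk => [|g] ea lt_gk; first by lia.
    have ea' : a.+1.-1 = g * kp n k + (kp n k).-1 by move: ea; rewrite r0 mulSn /=; lia.
    have := IH g (kp n k).-1 ltac:(lia) ea' ltac:(lia).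
    rewrite (_ : k - g = k - g.+1 + 1); last by lia.
    rewrite (_ : k - g.+1 + 1 + (kp n k).-1 + 1 = k - g.+1 + 1 + kp n k); last by lia.
    have shift : 0 < k - g.+1 < k by lia.
    rewrite r0 addn0 bshape_shift // => -[BaE ->].
    by split => // A; rewrite BaE Btab_shift.
  have ea' : a.+1.-1 = g * kp n k + r.-1 by lia.
  have := IH g r.-1 ltac:(lia) ea' ltac:(lia).
  by rewrite (_ : k - g + r.-1 + 1 = k - g + r); last by lia.
rewrite addn1; apply: Bset_succ prev.1 prev.2 => //; [lia | lia | by rewrite /iidx eg er].
Qed.

Unset Implicit Arguments.

Theorem mainTheorem3 (n k l : nat) :
  1 <= n -> 1 <= k <= n -> 1 <= l ->
  forall a : nat, 1 <= a <= k * kp n k ->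
  (forall A : 'M[nat]_(k, l),
     Bset n a A <->
     [/\ is_tab n A,
         (forall (i : 'I_k) (j : 'I_l), i.+1 < k - gidx n k a -> A i j = i.+1) &
         (forall (i : 'I_k) (j : 'I_l), i.+1 = k - gidx n k a ->
            A i j <= k - gidx n k a + ridx n k a + 1)]) /\
  bseq_a n k l a = b_expected n k l a.
Proof.
move=> _ k_range l_gt0 a a_range.
have kp_gt0 : 0 < kp n k by rewrite /kp; lia.
have ea : a.-1 = gidx n k a * kp n k + ridx n k a.
  by rewrite /ridx /gidx; have := divn_eq a.-1 (kp n k); lia.
have lt_r : ridx n k a < kp n k.
  by rewrite /ridx /gidx; have := divn_eq a.-1 (kp n k); have := ltn_pmod a.-1 kp_gt0; lia.
by have [BaE ->] := Bset_bseq_shape l_gt0 k_range a_range ea lt_r.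
Qed.
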